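(* Let $n\ge2$, $0\le m\le n(n-1)$ and $\kappa=\lfloor \frac{m}{n-1}\rfloor$. Then $\mathbb G(n,m)$ is the union of $\kappa$ simple $n$-vertex directed stars rooted at vertices $1,\dots,\kappa$ respectively, and the $n$-vertex simple directed forest consisting of an $(m-\kappa(n-1)+1)$-vertex directed star rooted at vertex $\kappa+1$ together with $n-(m-\kappa(n-1)+1)$ isolated vertices (when $m=\kappa(n-1)$ this forest has no arcs).
   Context: For integers $n\ge2$ and $0\le m\le n(n-1)$, $\mathbb G(n,m)$ is the simple directed graph on vertex set $\{1,\dots,n\}$ whose arc set is $\{(\lceil \frac{i}{n-1}\rceil,\ n-((i-1)\bmod n)) : i=1,\dots,m\}$, where an arc $(j,k)$ goes from $j$ to $k$ and $a\bmod b\in\{0,\dots,b-1\}$; these $m$ pairs are pairwise distinct pairs of distinct vertices. The $n$-vertex directed star rooted at $r$ has arcs $(r,j)$ for all $j\ne r$; a $k$-vertex directed star rooted at $r$ consists of $r$ and $k-1$ other vertices with arcs from $r$ to each of them. A union of graphs on the same vertex set has as arc set the union of their arc sets. *)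

From mathcomp Require Import all_boot.
Set Implicit Arguments. Unset Strict Implicit. Unset Printing Implicit Defensive.

(* Vertices are the naturals 1..n. *)
Definition ceil_div (a b : nat) : nat := (a + b.-1) %/ b.

Definition Garc_i (n i : nat) : nat * nat := (ceil_div i n.-1, n - (i.-1 %% n)).

Definition Garc (n m j k : nat) : Prop :=
  exists i, 1 <= i <= m /\ Garc_i n i = (j, k).

Definition star_arc (n r j k : nat) : Prop :=
  j = r /\ 1 <= k <= n /\ k <> r.

From mathcomp Require Import all_boot zify.

Set Implicit Arguments.
Unset Strict Implicit.

(* Writing the arc index as [i = q (n-1) + d + 1] with [d < n-1], the [i]-th
   arc goes from [q+1] to the [d]-th vertex of the cyclic list
   [q, q-1, ..., 1, n, n-1, ..., q+2]; hence each block of [n-1] consecutive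
   indices spells out the full directed star rooted at [q+1].  The first
   [m / (n-1)] blocks are complete, and the last [m mod (n-1)] arcs form a
   partial star rooted at [m / (n-1) + 1]. *)

Definition star_leaf (n j d : nat) : nat :=
  if d < j.-1 then j.-1 - d else n + j.-1 - d.

Section StarLeaf.

Variables n j : nat.
Hypothesis j_vertex : 1 <= j <= n.

Lemma star_leaf_vertex d : d < n.-1 ->
  1 <= star_leaf n j d <= n /\ star_leaf n j d <> j.
Proof. by move=> d_lt; rewrite /star_leaf; case: (ltnP d j.-1); lia. Qed.

Lemma star_leaf_inj d1 d2 : d1 < n.-1 -> d2 < n.-1 ->
  star_leaf n j d1 = star_leaf n j d2 -> d1 = d2.
Proof.
move=> d1_lt d2_lt; rewrite /star_leaf.
by case: (ltnP d1 j.-1); case: (ltnP d2 j.-1); lia.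
Qed.

Lemma star_leaf_onto k : 1 <= k <= n -> k <> j ->
  exists2 d, d < n.-1 & star_leaf n j d = k.
Proof.
move=> k_vertex k_neq_j; rewrite /star_leaf.
have [k_lt_j | j_le_k] := ltnP k j.
- by exists (j.-1 - k); last case: ifP; lia.
- by exists (n + j.-1 - k); last case: ifP; lia.
Qed.

Lemma star_arcE k :
  star_arc n j j k <-> exists2 d, d < n.-1 & star_leaf n j d = k.
Proof.
split=> [[_ [k_vertex k_neq_j]] | [d d_lt <-]]; first exact: star_leaf_onto.
by have [] := star_leaf_vertex d_lt.
Qed.

End StarLeaf.

Lemma ceil_div_succ t b : 0 < b -> ceil_div t.+1 b = (t %/ b).+1.
Proof.
move=> b_gt0; rewrite /ceil_div.
by rewrite (_ : t.+1 + b.-1 = 1 * b + t) ?divnMDl ?add1n //; lia.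
Qed.

Lemma Garc_i_blockE n q d : 2 <= n -> q < n -> d < n.-1 ->
  Garc_i n (q * n.-1 + d).+1 = (q.+1, star_leaf n q.+1 d).
Proof.
move=> n_ge2 q_lt d_lt; rewrite /Garc_i ceil_div_succ; last lia.
rewrite divnMDl ?divn_small ?addn0 //; last lia.
congr (_, _); rewrite /star_leaf /=; case: (ltnP d q) => d_q.
- rewrite (_ : q * n.-1 + d = q.-1 * n + (n + d - q)); last nia.
  by rewrite modnMDl modn_small; lia.
- rewrite (_ : q * n.-1 + d = q * n + (d - q)); last nia.
  by rewrite modnMDl modn_small; lia.
Qed.

Lemma Garc_blockP n m j k : 2 <= n -> m <= n * n.-1 ->
  Garc n m j k <->
  exists q d, [/\ d < n.-1, q * n.-1 + d < m, j = q.+1 & k = star_leaf n q.+1 d].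
Proof.
move=> n_ge2 m_le; have b_gt0 : 0 < n.-1 by lia.
have q_lt q d : q * n.-1 + d < m -> q < n.
  by move=> lt_m; rewrite -(ltn_pmul2r b_gt0); lia.
split=> [[i [/andP[i_gt0 i_le] arc_i]] | [q [d [d_lt lt_m -> ->]]]].
- have iE : i = (i.-1 %/ n.-1 * n.-1 + i.-1 %% n.-1).+1 by rewrite -divn_eq; lia.
  have t_lt : i.-1 %/ n.-1 * n.-1 + i.-1 %% n.-1 < m by rewrite -divn_eq; lia.
  move: arc_i; rewrite iE Garc_i_blockE ?ltn_mod //; last exact: q_lt t_lt.
  by case=> <- <-; exists (i.-1 %/ n.-1), (i.-1 %% n.-1); rewrite ltn_mod.
- by exists (q * n.-1 + d).+1; rewrite Garc_i_blockE //; exact: q_lt lt_m.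
Qed.

Lemma ltn_mulDl_divn b q d m : d < b ->
  (q * b + d < m) = (q < m %/ b) || (q == m %/ b) && (d < m %% b).
Proof.
move=> d_lt; rewrite {1}(divn_eq m b).
have := ltn_pmod m (leq_ltn_trans (leq0n d) d_lt).
case: (ltngtP q (m %/ b)) => [q_lt | q_gt | ->] /=; [nia | nia | lia].
Qed.

Definition partial_star_leaves (n m : nat) : seq nat :=
  map (star_leaf n (m %/ n.-1).+1) (iota 0 (m %% n.-1)).

Section Decomposition.

Variables n m : nat.
Hypotheses (n_ge2 : 2 <= n) (m_le : m <= n * n.-1).

Let b_gt0 : 0 < n.-1. Proof. by lia. Qed.

Lemma full_stars_le : m %/ n.-1 <= n.
Proof. by rewrite -(leq_pmul2r b_gt0); have := leq_divM m n.-1; lia. Qed.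

Lemma partial_star_root_vertex : 0 < m %% n.-1 -> 1 <= (m %/ n.-1).+1 <= n.
Proof.
move=> r_gt0; apply/andP; split=> //.
by rewrite -(ltn_pmul2r b_gt0); have := divn_eq m n.-1; lia.
Qed.

Lemma Garc_starsP j k :
  Garc n m j k <->
  (exists s, 1 <= s <= m %/ n.-1 /\ star_arc n s j k)
  \/ (j = (m %/ n.-1).+1 /\ k \in partial_star_leaves n m).
Proof.
have r_lt : m %% n.-1 < n.-1 by rewrite ltn_mod.
rewrite Garc_blockP //; split.
- case=> q [d [d_lt]]; rewrite ltn_mulDl_divn // => /orP[q_lt | /andP[/eqP-> d_r]] -> ->.
  + left; exists q.+1; split; first lia.
    by apply/star_arcE; [have := full_stars_le; lia | exists d].
  + by right; split => //; apply: map_f; rewrite mem_iota.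
- case=> [[s [s_full /[dup] [[-> _]]]] | [-> /mapP[d]]].
  + have s_vertex : 1 <= s <= n by have := full_stars_le; lia.
    case/(star_arcE s_vertex) => d d_lt <-.
    exists s.-1, d; rewrite prednK; last lia.
    by split => //; rewrite ltn_mulDl_divn //; apply/orP; left; lia.
  + rewrite mem_iota => d_r ->; have d_lt : d < n.-1 by lia.
    by exists (m %/ n.-1), d; rewrite ltn_mulDl_divn // eqxx d_r orbT.
Qed.

End Decomposition.

Theorem proposition1 (n m : nat) :
  2 <= n -> m <= n * (n - 1) ->
  let kappa := m %/ (n - 1) in
  exists S : seq nat,
    [/\ uniq S,
        size S = m - kappa * (n - 1),
        (0 < size S -> 1 <= kappa.+1 <= n),
        (forall v, v \in S -> 1 <= v <= n /\ v <> kappa.+1)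
      & (forall j k, Garc n m j k <->
           ((exists r, 1 <= r <= kappa /\ star_arc n r j k)
            \/ (j = kappa.+1 /\ k \in S)))].
Proof.
move=> n_ge2 m_le kappa; rewrite /kappa subn1 in m_le *.
have r_lt : m %% n.-1 < n.-1 by rewrite ltn_mod; lia.
exists (partial_star_leaves n m); rewrite /partial_star_leaves size_map size_iota.
split=> [||||j k]; last exact: Garc_starsP.
- rewrite map_inj_in_uniq ?iota_uniq // => d1 d2; rewrite !mem_iota => ? ?.
  apply: star_leaf_inj; last lia; last lia.
  by apply: partial_star_root_vertex; lia.
- by have := divn_eq m n.-1; lia.
- exact: partial_star_root_vertex.
- move=> v /mapP[d]; rewrite mem_iota => d_lt ->.
  by apply: star_leaf_vertex; [apply: partial_star_root_vertex | ]; lia.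
Qed.
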